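(* Let $G$ be a plane graph containing no $3$-cycle, $4$-cycle and $5$-cycle that are pairwise adjacent, with a $3$-cycle $C_0$, $s\ge1$, a cover $H$ of $G$ with respect to $L(v)=\{1,\dots,s\}$ for all $v$, $F=(f_1,\dots,f_s)$ with $f_i(v)\in\{0,1,2\}$ and $f_1(v)+\cdots+f_s(v)\ge4$ for all $v$, and a DP-$F$-coloring $R_0$ of $C_0$ (with respect to the restriction of $H$) that cannot be extended to a DP-$F$-coloring of $(G,H)$; suppose $|V(G)|$ is minimum among all such counterexamples. Then $G$ has no separating $3$-cycles.
   Context: Two cycles are adjacent if they share an edge. A cycle $C$ of a plane graph is separating if there are vertices of $G$ both inside and outside $C$. A cover $H$ of $G$ w.r.t. $L$ has vertex set $\{(u,c):c\in L(u)\}$, each $\{u\}\times L(u)$ is a clique, for each edge $uv$ the edges between $\{u\}\times L(u)$ and $\{v\}\times L(v)$ form a matching, and there are no such edges for non-adjacent $u,v$. A representative set contains exactly one vertex of each $\{v\}\times L(v)$. A DP-$F$-coloring is a representative set $R$ admitting an ordering in which each $(v,i)\in R$ has fewer than $f_i(v)$ $H$-neighbors among earlier elements of $R$; extending $R_0$ means finding a DP-$F$-coloring of $(G,H)$ containing $R_0$. *)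

From mathcomp Require Import all_boot all_order all_algebra.
From mathcomp Require Import all_classical all_reals all_analysis.
From mathcomp Require Import Rstruct Rstruct_topology.
Set Implicit Arguments. Unset Strict Implicit. Unset Printing Implicit Defensive.
Import Order.TTheory GRing.Theory Num.Theory.
Import numFieldNormedType.Exports.

Definition simple_graph (V : finType) (G : rel V) : Prop :=
  symmetric G /\ irreflexive G.

Definition is_kcycle (V : finType) (G : rel V) (k : nat) (c : seq V) : bool :=
  [&& 3 <= k, size c == k, uniq c & cycle G c].

Definition cycle_edge (V : finType) (c : seq V) (x y : V) : bool :=
  ((x \in c) && (next c x == y)) || ((y \in c) && (next c y == x)).

Definition adjacent_cycles (V : finType) (c1 c2 : seq V) : Prop :=
  exists x y, cycle_edge c1 x y /\ cycle_edge c2 x y.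

Definition no_adjacent_345 (V : finType) (G : rel V) : Prop :=
  ~ exists c3 c4 c5, [/\ is_kcycle G 3 c3, is_kcycle G 4 c4, is_kcycle G 5 c5 &
        [/\ adjacent_cycles c3 c4, adjacent_cycles c3 c5 & adjacent_cycles c4 c5]].

(* Plane graphs: vertices are distinct points of R^2, each edge uv is a *)
(* Jordan arc from pos u to pos v; arcs meet only at common endpoints.  *)
Section Plane.
Variable R : realType.
Local Open Scope classical_set_scope.
Local Open Scope ring_scope.



Definition arc_img (g : R -> (R * R)%type) : set (R * R)%type := g @` `[(0:R), (1:R)].
Definition arc_open_img (g : R -> (R * R)%type) : set (R * R)%type := g @` `](0:R), (1:R)[.

Definition plane_embedding (V : finType) (G : rel V)
    (pos : V -> (R * R)%type) (arc : V -> V -> R -> (R * R)%type) : Prop :=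
  [/\ injective pos,
      (forall u v, G u v ->
        [/\ {within `[(0:R), (1:R)], continuous (arc u v)},
            {in `[(0:R), (1:R)] &, injective (arc u v)},
            arc u v 0 = pos u, arc u v 1 = pos v &
            arc_img (arc u v) = arc_img (arc v u)]),
      (forall u v w, G u v -> ~ arc_open_img (arc u v) (pos w)) &
      (forall u v x y, G u v -> G x y -> ~ (u = x /\ v = y) -> ~ (u = y /\ v = x) ->
         arc_open_img (arc u v) `&` arc_open_img (arc x y) = set0)].

Definition cycle_curve (V : finType) (arc : V -> V -> R -> (R * R)%type) (c : seq V)
  : set (R * R)%type := \bigcup_(x in [set x | x \in c]) arc_img (arc x (next c x)).

Definition bounded_pts (A : set (R * R)%type) : Prop :=
  exists M : R, forall p, A p -> `|p.1| <= M /\ `|p.2| <= M.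

Definition inside_curve (K : set (R * R)%type) (p : (R * R)%type) : Prop :=
  ~ K p /\ bounded_pts (connected_component (~` K) p).
Definition outside_curve (K : set (R * R)%type) (p : (R * R)%type) : Prop :=
  ~ K p /\ ~ bounded_pts (connected_component (~` K) p).

Definition separating_cycle (V : finType) (pos : V -> (R * R)%type)
    (arc : V -> V -> R -> (R * R)%type) (c : seq V) : Prop :=
  (exists w, inside_curve (cycle_curve arc c) (pos w)) /\
  (exists w, outside_curve (cycle_curve arc c) (pos w)).

End Plane.

(* DP-colouring.  Lists L(v) = {1,...,s} are represented by 'I_s        *)
(* (colour i+1 <-> ordinal i).  The cover H is a graph on pairs (v,c).  *)
Definition is_cover (V : finType) (G : rel V) (s : nat) (H : rel (V * 'I_s)) : Prop :=
  [/\ symmetric H, irreflexive H,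
      (forall u (c d : 'I_s), c != d -> H (u, c) (u, d)),
      (forall u v (c d : 'I_s), u != v -> H (u, c) (v, d) -> G u v) &
      (forall u v (c d d' : 'I_s), u != v ->
          H (u, c) (v, d) -> H (u, c) (v, d') -> d = d')].

(* A representative set R (exactly one vertex (v, phi v) of each fibre,
   for v in the vertex set S) is a DP-F-coloring if it admits an ordering
   in which each (v,i) in R has fewer than f_i(v) H-neighbours among the
   earlier elements of R. *)
Definition dpF_coloring (V : finType) (s : nat) (H : rel (V * 'I_s))
    (f : 'I_s -> V -> nat) (S : {set V}) (phi : V -> 'I_s) : Prop :=
  exists ord : seq V,
    [/\ uniq ord, ord =i S &
      forall (pre post : seq V) (v : V), ord = pre ++ v :: post ->
        count (fun u => H (v, phi v) (u, phi u)) pre < f (phi v) v].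

Definition counterexample (V : finType) (G : rel V)
    (pos : V -> (Rdefinitions.R * Rdefinitions.R)%type) (arc : V -> V -> Rdefinitions.R -> (Rdefinitions.R * Rdefinitions.R)%type)
    (c0 : seq V) (s : nat) (H : rel (V * 'I_s)) (f : 'I_s -> V -> nat)
    (phi0 : V -> 'I_s) : Prop :=
  [/\ simple_graph G, plane_embedding G pos arc, no_adjacent_345 G,
      is_kcycle G 3 c0 & 1 <= s] /\ [/\ is_cover G H,
      (forall v, (forall i, f i v <= 2) /\ 4 <= \sum_(i < s) f i v),
      dpF_coloring H f [set x in c0]%SET phi0 &
      ~ exists phi, dpF_coloring H f [set: V]%SET phi /\ {in c0, phi =1 phi0}].

Definition has_counterexample (V : finType) : Prop :=
  exists G pos arc c0 s H f phi0, @counterexample V G pos arc c0 s H f phi0.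

From mathcomp Require Import all_boot all_order all_algebra.
From mathcomp Require Import all_classical all_reals all_analysis.
From mathcomp Require Import Rstruct Rstruct_topology.
From mathcomp Require Import zify.
Set Implicit Arguments. Unset Strict Implicit. Unset Printing Implicit Defensive.
Import Order.TTheory GRing.Theory Num.Theory.
Import numFieldNormedType.Exports.

(* Let C be a separating triangle, B the side of C avoiding C0 and A the other
   side, so that no edge joins A and B.  By minimality R0 extends to a colouring
   of G - B.  Its restriction to C is then pinned on G - A: the cover gets one
   extra isolated colour, the colour already chosen at a vertex of C gets weight
   1, its other colours weight 2, and there are no cover edges inside C.
   Minimality extends this precolouring of C as well, and weight 1 forces every
   vertex of C to precede its coloured neighbours.  Hence appending the vertices
   of B, in that order, to the order of G - B gives a DP-F-colouring of G
   extending R0. *)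

Lemma split_cat_cons (T : Type) (s1 s2 pre post : seq T) v :
  s1 ++ s2 = pre ++ v :: post ->
  (exists post1, s1 = pre ++ v :: post1) \/
  (exists pre2, pre = s1 ++ pre2 /\ s2 = pre2 ++ v :: post).
Proof.
elim: s1 pre => [|x s1 IH] pre /=; first by move=> ->; right; exists pre.
case: pre => [|y pre] /= [-> e]; first by left; exists s1.
case: (IH _ e) => [[post1 ->]|[pre2 [-> ->]]]; first by left; exists post1.
by right; exists pre2.
Qed.

Lemma map_eq_cat_cons (T1 T2 : Type) (g : T1 -> T2) s pre v post :
  map g s = pre ++ v :: post ->
  exists pre1 u post1, [/\ s = pre1 ++ u :: post1, map g pre1 = pre & g u = v].
Proof.
elim: s pre => [|x s IH] [|y pre] //= [e1 e2]; first by exists [::], x, s.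
have [pre1 [u [post1 [-> <- <-]]]] := IH _ e2.
by exists (x :: pre1), u, post1; rewrite /= e1.
Qed.

Lemma filter_eq_cat_cons (T : Type) (p : pred T) s pre v post :
  [seq x <- s | p x] = pre ++ v :: post ->
  exists s1 s2, s = s1 ++ v :: s2 /\ [seq x <- s1 | p x] = pre.
Proof.
elim: s pre => [|x s IH] pre /=; first by case: pre.
case: ifP => px; last first.
  by case/IH=> s1 [s2 [-> <-]]; exists (x :: s1), s2; rewrite /= px.
case: pre => [|y pre] /= [<- e]; first by exists [::], s.
have [s1 [s2 [-> <-]]] := IH _ e.
by exists (x :: s1), s2; rewrite /= px.
Qed.

Lemma count_filterC (T : Type) (a b : pred T) s :
  count a [seq x <- s | b x] + count a [seq x <- s | ~~ b x] = count a s.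
Proof.
elim: s => //= x s <-; case: (b x) => /=; first by rewrite addnA.
by rewrite addnCA.
Qed.

Lemma map_val_pmap_insub (T : eqType) (P : pred T) (sT : subType P) s :
  {in s, forall x, P x} -> map val (pmap (insub : T -> option sT) s) = s.
Proof.
move=> sP; rewrite (pmap_filter (@insubK _ _ _)); apply/all_filterP/allP => x.
by move/sP; rewrite -(isSome_insub sT).
Qed.

Section DegenerateOrders.
Variables (V : eqType) (s : nat) (H : rel (V * 'I_s)) (f : 'I_s -> V -> nat).
Variable phi : V -> 'I_s.

Definition dpF_order (ord : seq V) : Prop :=
  forall pre post v, ord = pre ++ v :: post ->
    count (fun u => H (v, phi v) (u, phi u)) pre < f (phi v) v.

Lemma dpF_order_cat ord1 ord2 : dpF_order ord1 ->
  (forall pre post v, ord2 = pre ++ v :: post ->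
     count (fun u => H (v, phi v) (u, phi u)) (ord1 ++ pre) < f (phi v) v) ->
  dpF_order (ord1 ++ ord2).
Proof.
move=> dp1 dp2 pre post v e.
have [[post1 e1]|[pre2 [-> e2]]] := split_cat_cons e.
  exact: dp1 e1.
exact: dp2 e2.
Qed.

Lemma dpF_order_weight1_no_earlier_nbr ord pre v post x :
  dpF_order ord -> ord = pre ++ v :: post -> x \in post -> f (phi x) x <= 1 ->
  ~~ H (x, phi x) (v, phi v).
Proof.
move=> dp eo xpost; case/splitPr: xpost eo => post1 post2 eo fx1.
apply/negP => Hxv.
have := dp (pre ++ v :: post1) post2 x; rewrite -catA => /(_ eo).
by rewrite count_cat /= Hxv add1n addnS => /leq_trans/(_ fx1).
Qed.

End DegenerateOrders.

Lemma dpF_order_map (U V : eqType) s (H : rel (V * 'I_s)) f phi (g : U -> V) ord :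
  dpF_order H f phi (map g ord) <->
  dpF_order (relpre (fun p => (g p.1, p.2)) H) (fun i x => f i (g x)) (phi \o g) ord.
Proof.
split=> dp pre post v.
  by move=> e; have := dp (map g pre) (map g post) (g v); rewrite e map_cat count_map; apply.
move=> e; have [pre1 [u [post1 [/dp + <- <-]]]] := map_eq_cat_cons e.
by rewrite count_map.
Qed.


Lemma dpF_coloring_weight_gt0 (V : finType) s (H : rel (V * 'I_s)) f (S : {set V})
    (phi : V -> 'I_s) v :
  dpF_coloring H f S phi -> v \in S -> 0 < f (phi v) v.
Proof.
case=> ord [_ mo dp]; rewrite -mo => vo.
case/splitPr: vo dp => pre post /(_ pre post v erefl).
exact: leq_ltn_trans (leq0n _).
Qed.

Lemma eq_in_dpF_coloring (V : finType) s (H : rel (V * 'I_s)) f (S : {set V})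
    (phi psi : V -> 'I_s) :
  {in S, phi =1 psi} -> dpF_coloring H f S phi -> dpF_coloring H f S psi.
Proof.
move=> e [ord [uo mo dp]]; exists ord; split=> // pre post v eo.
have inS u : u \in pre ++ v :: post -> u \in S by rewrite -eo mo.
rewrite -e ?inS ?mem_cat ?mem_head ?orbT //.
rewrite -(eq_in_count (a1 := fun u => H (v, phi v) (u, phi u))); first exact: dp eo.
by move=> u upre /=; rewrite !e ?inS ?mem_cat ?upre ?mem_head ?orbT.
Qed.

Section Induced.
Variables (V : finType) (S : {set V}).
Local Notation sub := {x : V | x \in S}.
Local Notation induced G := (relpre (val : sub -> V) G).

Definition induced_cover s (H : rel (V * 'I_s)) : rel (sub * 'I_s) :=
  relpre (fun p => (val p.1, p.2)) H.

Definition induced_weights s (f : 'I_s -> V -> nat) : 'I_s -> sub -> nat :=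
  fun i x => f i (val x).

Lemma card_induced_lt x : x \notin S -> #|{: sub}| < #|V|.
Proof.
move=> xS; rewrite card_sig (eq_card (B := S)) // -cardsT.
by apply: proper_card; rewrite properT; apply: contraNneq xS => ->; rewrite inE.
Qed.

Lemma simple_graph_induced (G : rel V) : simple_graph G -> simple_graph (induced G).
Proof. by case=> sym irr; split=> [x y|x] /=; [exact: sym | exact: irr]. Qed.

Lemma is_kcycle_induced (G : rel V) k (c : seq sub) :
  is_kcycle (induced G) k c = is_kcycle G k (map val c).
Proof. by rewrite /is_kcycle size_map (map_inj_uniq val_inj) cycle_map. Qed.

Lemma cycle_edge_induced (c : seq sub) x y : uniq c -> cycle_edge c x y ->
  cycle_edge (map val c) (val x) (val y).
Proof.
by move=> uc; rewrite /cycle_edge !(mem_map val_inj) !(next_map val_inj uc) !(inj_eq val_inj).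
Qed.

Lemma adjacent_cycles_induced (c1 c2 : seq sub) : uniq c1 -> uniq c2 ->
  adjacent_cycles c1 c2 -> adjacent_cycles (map val c1) (map val c2).
Proof.
move=> u1 u2 [x [y [e1 e2]]].
by exists (val x), (val y); split; apply: cycle_edge_induced.
Qed.

Lemma no_adjacent_345_induced (G : rel V) :
  no_adjacent_345 G -> no_adjacent_345 (induced G).
Proof.
move=> no [c3 [c4 [c5 [k3 k4 k5 [a34 a35 a45]]]]]; apply: no.
have [u3 u4 u5] : [/\ uniq c3, uniq c4 & uniq c5].
  by split; [case/and4P: k3 | case/and4P: k4 | case/and4P: k5].
exists (map val c3), (map val c4), (map val c5).
by rewrite -!is_kcycle_induced; split=> //; split; apply: adjacent_cycles_induced.
Qed.

Lemma plane_embedding_induced (R : realType) (G : rel V) pos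
    (arc : V -> V -> R -> (R * R)%type) :
  plane_embedding G pos arc ->
  plane_embedding (induced G) (fun x => pos (val x)) (fun x y => arc (val x) (val y)).
Proof.
case=> inj arcs interior disjoint; split.
- by move=> x y /inj /val_inj.
- by move=> u v /arcs.
- by move=> u v w /interior.
- move=> u v x y Guv Gxy n1 n2; apply: disjoint => // -[/val_inj e1 /val_inj e2].
  + exact: n1.
  + exact: n2.
Qed.

Lemma is_cover_induced (G : rel V) s (H : rel (V * 'I_s)) :
  is_cover G H -> is_cover (induced G) (induced_cover H).
Proof.
case=> sym irr clique adj matching; split.
- by move=> p q; apply: sym.
- by move=> p; apply: irr.
- by move=> u c d; apply: clique.
- by move=> u v c d uv; apply: adj; rewrite (inj_eq val_inj).
- by move=> u v c d d' uv; apply: matching; rewrite (inj_eq val_inj).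
Qed.

Lemma dpF_coloring_induced (T : {set V}) s (H : rel (V * 'I_s)) f phi :
  {subset T <= S} ->
  dpF_coloring (induced_cover H) (induced_weights f) [set x | val x \in T] (phi \o val) <->
  dpF_coloring H f T phi.
Proof.
move=> TS; split=> -[ord [uo mo dp]].
  exists (map val ord); split.
  - by rewrite (map_inj_uniq val_inj).
  - move=> x; apply/mapP/idP => [[y + ->]|xT]; first by rewrite mo inE.
    by exists (Sub x (TS x xT)); rewrite ?mo ?inE SubK.
  - exact/dpF_order_map.
have ord_val : map val (pmap insub ord : seq sub) = ord.
  by apply: map_val_pmap_insub => x; rewrite mo => /TS.
exists (pmap insub ord); split.
- exact: pmap_sub_uniq.
- by move=> x; rewrite mem_pmap_sub mo !inE.
- by apply/dpF_order_map; rewrite ord_val.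
Qed.

End Induced.

Definition valid_weights (V : finType) s (f : 'I_s -> V -> nat) : Prop :=
  forall v, (forall i, f i v <= 2) /\ 4 <= \sum_(i < s) f i v.

Lemma valid_weights_gt1 (V : finType) s (f : 'I_s -> V -> nat) (v : V) :
  valid_weights f -> 1 < s.
Proof.
move=> /(_ v)[le2 ge4].
have : \sum_(i < s) f i v <= \sum_(i < s) 2 by apply: leq_sum => i _; apply: le2.
rewrite sum_nat_const card_ord => /(leq_trans ge4).
by case: s {f le2 ge4} => [|[|]].
Qed.

Section Pinned.
Variables (V : finType) (s : nat) (C : {set V}).
Variables (H : rel (V * 'I_s)) (f : 'I_s -> V -> nat) (phi : V -> 'I_s).

(* Colour [i] of [H] becomes [lift ord_max i]; the new colour [ord_max] keeps
   the weight sum of a vertex of [C] at [2 s + 1 >= 4]. *)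
Definition pin_cover : rel (V * 'I_s.+1) := fun p q =>
  if p.1 == q.1 then p.2 != q.2 else
  ~~ ((p.1 \in C) && (q.1 \in C)) &&
  match unlift ord_max p.2, unlift ord_max q.2 with
  | Some i, Some j => H (p.1, i) (q.1, j)
  | _, _ => false
  end.

Definition pin_weights : 'I_s.+1 -> V -> nat := fun i v =>
  if v \in C then (if i == lift ord_max (phi v) then 1 else 2)
  else if unlift ord_max i is Some j then f j v else 0.

Lemma pin_cover_lift u w i j :
  pin_cover (u, lift ord_max i) (w, lift ord_max j) =
  if u == w then i != j else ~~ ((u \in C) && (w \in C)) && H (u, i) (w, j).
Proof. by rewrite /pin_cover /= !liftK (inj_eq (@lift_inj _ _)). Qed.

Lemma pin_weights_lift i v :
  pin_weights (lift ord_max i) v = if v \in C then (if i == phi v then 1 else 2) else f i v.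
Proof. by rewrite /pin_weights liftK (inj_eq (@lift_inj _ _)). Qed.

Lemma is_cover_pin (G : rel V) : is_cover G H -> is_cover G pin_cover.
Proof.
case=> sym irr _ adj matching; split.
- move=> [u i] [w j]; rewrite /pin_cover /= eq_sym [i == j]eq_sym [(w \in C) && _]andbC.
  case: eqP => // _; congr (_ && _).
  by case: (unlift ord_max i) => [i'|]; case: (unlift ord_max j) => [j'|] //; rewrite sym.
- by move=> [u i]; rewrite /pin_cover /= !eqxx.
- by move=> u i j ij; rewrite /pin_cover /= eqxx.
- move=> u w i j uw; rewrite /pin_cover /= (negPf uw) => /andP[_].
  by case: (unlift ord_max i) => [i'|] //; case: (unlift ord_max j) => [j'|] //; apply: adj.
- move=> u w i j j' uw; rewrite /pin_cover /= (negPf uw) => /andP[_ + ] /andP[_].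
  case: (unlift ord_max i) => [i'|] //.
  case: (unliftP ord_max j) => [k ->|->] //; case: (unliftP ord_max j') => [k' ->|->] //.
  by move=> Hk Hk'; rewrite (matching u w i' k k').
Qed.

Lemma valid_weights_pin : 1 < s -> valid_weights f -> valid_weights pin_weights.
Proof.
move=> s_gt1 fv v; split=> [i|].
  rewrite /pin_weights; case: ifP => _; first by case: ifP.
  by case: (unlift ord_max i) => [j|] //; case: (fv v) => ->.
have widen_lift i : widen_ord (leqnSn s) i = lift ord_max i.
  by apply: val_inj; rewrite /= /bump leqNgt ltn_ord.
rewrite big_ord_recr /= {2}/pin_weights unlift_none.
under eq_bigr => i _ do rewrite widen_lift pin_weights_lift.
case: ifP => vC; last by rewrite addn0; case: (fv v).
rewrite (negbTE (neq_lift _ _)) (bigD1 (phi v)) //= eqxx.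
under eq_bigr => i /negbTE -> do [].
by rewrite sum_nat_const cardC1 card_ord; lia.
Qed.

Lemma dpF_coloring_pin :
  dpF_coloring pin_cover pin_weights C (fun v => lift ord_max (phi v)).
Proof.
exists (enum C); split=> [||pre post v e]; [exact: enum_uniq | exact: mem_enum |].
have inC u : u \in pre ++ v :: post -> u \in C by rewrite -e mem_enum.
have vpre : v \notin pre.
  move: (enum_uniq (mem C)); rewrite e cat_uniq => /and3P[_ /hasPn + _].
  by apply; rewrite mem_head.
rewrite pin_weights_lift inC ?mem_cat ?mem_head ?orbT // eqxx.
rewrite (@eq_in_count _ _ pred0) ?count_pred0 // => u upre /=.
rewrite pin_cover_lift !inC ?mem_cat ?upre ?mem_head ?orbT //=.
by case: eqP => // vu; move: vpre; rewrite vu upre.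
Qed.

End Pinned.

Definition separates (V : finType) (G : rel V) (C B : {set V}) : Prop :=
  [disjoint B & C] /\ forall u v, u \in B -> G u v -> v \in B :|: C.

Section Glue.
Variables (V : finType) (G : rel V) (s : nat).
Variables (H : rel (V * 'I_s)) (f : 'I_s -> V -> nat) (B C : {set V}).
Variables (phi : V -> 'I_s) (phi2 : V -> 'I_s.+1) (ord2 : seq V).
Hypotheses (coverH : is_cover G H) (sepCB : separates G C B).
Hypothesis phi2E : {in B :|: C, forall v, phi2 v = lift ord_max (phi v)}.
Hypotheses (uniq2 : uniq ord2) (mem2 : ord2 =i B :|: C).
Hypothesis order2 : dpF_order (pin_cover C H) (pin_weights C f phi) phi2 ord2.
Local Notation nbr v := (fun u => H (v, phi v) (u, phi u)).

Lemma cover_nbr_off_side v u i j :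
  v \in B -> u \notin B -> H (v, i) (u, j) -> u \in C.
Proof.
case: coverH sepCB => _ _ _ adj _ [_ closed] vB uB /adj Gvu.
have vu : v != u by apply: contraNneq uB => <-.
by have := closed v u vB (Gvu vu); rewrite inE (negbTE uB).
Qed.

Lemma pin_cover_phi2 u w : u \in B :|: C -> w \in B :|: C -> u != w ->
  pin_cover C H (u, phi2 u) (w, phi2 w) =
  ~~ ((u \in C) && (w \in C)) && H (u, phi u) (w, phi w).
Proof. by move=> uBC wBC uw; rewrite !phi2E // pin_cover_lift (negbTE uw). Qed.

Lemma count_nbr_before_side_lt la v lb : ord2 = la ++ v :: lb -> v \in B ->
  count (nbr v) la < f (phi v) v.
Proof.
move=> eo vB; have vC : v \notin C by rewrite (disjointFr sepCB.1 vB).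
have in2 u : u \in la ++ v :: lb -> u \in B :|: C by rewrite -eo mem2.
have vla : v \notin la.
  by move: uniq2; rewrite eo cat_uniq => /and3P[_ /hasPn + _]; apply; rewrite mem_head.
have := order2 eo; rewrite (eq_in_count (a2 := nbr v)) => [|u ula].
  by rewrite phi2E ?in2 ?mem_cat ?mem_head ?orbT // pin_weights_lift (negbTE vC).
rewrite pin_cover_phi2 ?in2 ?mem_cat ?ula ?mem_head ?orbT ?(negbTE vC) //.
by apply: contraNneq vla => ->.
Qed.

Lemma nbr_off_side_before la v lb u : ord2 = la ++ v :: lb ->
  v \in B -> u \notin B -> H (v, phi v) (u, phi u) -> u \in la.
Proof.
move=> eo vB uB nvu; have vC : v \notin C by rewrite (disjointFr sepCB.1 vB).
have uC : u \in C := cover_nbr_off_side vB uB nvu.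
have uv : u != v by apply: contraNneq uB => ->.
have : u \in la ++ v :: lb by rewrite -eo mem2 inE uC orbT.
rewrite mem_cat inE (negbTE uv) /= => /orP[// | ulb].
have := dpF_order_weight1_no_earlier_nbr order2 eo ulb.
rewrite pin_cover_phi2 ?inE ?uC ?vB ?orbT // (negbTE vC).
rewrite phi2E ?inE ?uC ?orbT // pin_weights_lift ?uC eqxx.
by case: coverH => symH _ _ _ _; rewrite symH nvu => /(_ isT).
Qed.

Lemma dpF_coloring_glue :
  dpF_coloring H f (~: B) phi -> dpF_coloring H f [set: V]%SET phi.
Proof.
move=> [ord1 [uniq1 mem1 order1]].
pose inB : pred V := fun u => u \in B.
exists (ord1 ++ [seq u <- ord2 | inB u]); split.
- rewrite cat_uniq uniq1 filter_uniq // andbT; apply/hasPn => x.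
  by rewrite mem_filter mem1 inE negbK => /andP[].
- by move=> x; rewrite mem_cat mem_filter mem1 mem2 !inE /inB; case: (x \in B).
apply: dpF_order_cat => // pre post v ef.
have [la [lb [eo <-]]] := filter_eq_cat_cons ef.
have vB : v \in B.
  have : v \in [seq u <- ord2 | inB u] by rewrite ef mem_cat mem_head orbT.
  by rewrite mem_filter => /andP[].
have ord1_la :
    {subset [seq u <- ord1 | nbr v u] <= [seq u <- [seq u <- la | ~~ inB u] | nbr v u]}.
  move=> u; rewrite !mem_filter mem1 inE => /andP[nvu uB]; rewrite nvu uB /=.
  exact: nbr_off_side_before eo vB uB nvu.
rewrite count_cat; apply: leq_ltn_trans (count_nbr_before_side_lt eo vB).
rewrite -(count_filterC (nbr v) inB la) addnC leq_add2l -!size_filter.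
exact: uniq_leq_size (filter_uniq _ uniq1) ord1_la.
Qed.

End Glue.

Section CycleCurve.
Local Open Scope classical_set_scope.
Local Open Scope ring_scope.
Variables (R : realType) (V : finType) (G : rel V) (pos : V -> (R * R)%type).
Variables (arc : V -> V -> R -> (R * R)%type) (c : seq V).
Hypotheses (planeG : plane_embedding G pos arc) (cycG : cycle G c).
Let K := cycle_curve arc c.

Lemma itv01_cases (t : R) :
  `[(0:R), (1:R)]%classic t -> t = 0 \/ t = 1 \/ `](0:R), (1:R)[%classic t.
Proof.
rewrite /= !in_itv /= => /andP[t0 t1].
have [->|n0] := eqVneq t 0; first by left.
have [->|n1] := eqVneq t 1; first by right; left.
by right; right; rewrite lt_neqAle eq_sym n0 t0 lt_neqAle n1 t1.
Qed.

Lemma cycle_curve_vertex w : K (pos w) <-> w \in c.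
Proof.
case: planeG => inj arcs interior _; split.
- move=> [x xc [t t01 ht]]; have Gx := next_cycle cycG xc.
  have [_ _ arc0 arc1 _] := arcs _ _ Gx.
  case: (itv01_cases t01) => [t0|[t1|t_in]].
  + by move: ht; rewrite t0 arc0 => /inj <-.
  + by move: ht; rewrite t1 arc1 => /inj <-; rewrite mem_next.
  + by case: (interior _ _ w Gx); exists t.
- move=> wc; have [_ _ arc0 _ _] := arcs _ _ (next_cycle cycG wc).
  by exists w => //; exists 0; rewrite ?arc0 //= in_itv /= lexx ler01.
Qed.

Lemma connected_component_edge u w : G u w -> ~ K (pos u) -> ~ K (pos w) ->
  connected_component (~` K) (pos u) = connected_component (~` K) (pos w).
Proof.
move=> Guw Ku Kw; case: planeG => inj arcs interior disjoint.
have [cont _ arc0 arc1 _] := arcs _ _ Guw.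
have uc : u \notin c by apply: contra_notN Ku => /cycle_curve_vertex.
have arc_off : arc_img (arc u w) `<=` ~` K.
  move=> p [t t01 <-] [x xc [t' t'01 ht']].
  have Gx := next_cycle cycG xc.
  have [_ _ arcx0 arcx1 _] := arcs _ _ Gx.
  case: (itv01_cases t01) => [t0|[t1|t_in]].
  - by apply: Ku; rewrite -arc0 -t0; exists x => //; exists t'.
  - by apply: Kw; rewrite -arc1 -t1; exists x => //; exists t'.
  case: (itv01_cases t'01) => [t0|[t1|t'_in]].
  - by apply: (interior _ _ x Guw); exists t => //; rewrite -arcx0 -t0.
  - by apply: (interior _ _ (next c x) Guw); exists t => //; rewrite -arcx1 -t1.
  have ux : u <> x by move=> ex; move: uc; rewrite ex xc.
  have uy : u <> next c x by move=> ex; move: uc; rewrite ex mem_next xc.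
  have := disjoint _ _ _ _ Guw Gx (fun h => ux h.1) (fun h => uy h.1).
  by move/seteqP => [/(_ (arc u w t)) + _]; apply; split; [exists t | exists t'].
have arc_conn : connected (arc_img (arc u w)).
  apply: connected_continuous_connected => //.
  by apply/connected_intervalP; exact: interval_is_interval.
have arc_u : arc_img (arc u w) (pos u) by exists 0; rewrite ?arc0 //= in_itv /= lexx ler01.
have arc_w : arc_img (arc u w) (pos w) by exists 1; rewrite ?arc1 //= in_itv /= lexx ler01.
apply: same_connected_component.
exact: connected_component_max arc_off arc_conn _ arc_w.
Qed.

Lemma curve_side_separates (Q : set (R * R)%type -> Prop) :
  separates G [set x in c]
    [set w | `[< ~ K (pos w) /\ Q (connected_component (~` K) (pos w)) >]].
Proof.
split.
  apply/pred0P => w /=; rewrite !inE; apply/negP => /andP[/asboolP[Kw _] wc].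
  exact/Kw/cycle_curve_vertex.
move=> u w; rewrite inE => /asboolP[Ku Qu] Guw; rewrite !inE.
have [wc|Kw] := boolP (w \in c); first by rewrite orbT.
have {}Kw : ~ K (pos w) by move/cycle_curve_vertex; apply/negP.
by apply/orP; left; apply/asboolP; rewrite -(connected_component_edge Guw Ku Kw).
Qed.

End CycleCurve.

Lemma kcycle3_clique (V : finType) (G : rel V) (c : seq V) :
  simple_graph G -> is_kcycle G 3 c -> {in c &, forall x y, x != y -> G x y}.
Proof.
move=> [sym _] /and4P[_ /eqP + _]; case: c => [|p [|q [|r [|]]]] //= _.
rewrite !andbT => /and3P[pq qr rp] x y.
by rewrite !inE => /or3P[] /eqP-> /or3P[] /eqP->; rewrite ?eqxx // => _; rewrite // sym.
Qed.

Lemma clique_misses_side (V : finType) (G : rel V) (C B1 B2 : {set V}) (c : seq V) :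
  {in c &, forall x y, x != y -> G x y} ->
  separates G C B1 -> separates G C B2 -> [disjoint B1 & B2] ->
  {subset c <= ~: B1} \/ {subset c <= ~: B2}.
Proof.
move=> clique [_ closed1] [dis2 _] dis12.
have [/hasP[x xc xB1]|/hasPn noB1] := boolP (has (fun x => x \in B1) c); last first.
  by left=> y /noB1; rewrite inE.
right=> y yc; rewrite inE; have [<-|xy] := eqVneq x y; first by rewrite (disjointFr dis12 xB1).
have := closed1 x y xB1 (clique x y xc yc xy); rewrite inE => /orP[yB1|yC].
  by rewrite (disjointFr dis12 yB1).
by rewrite (disjointFl dis2 yC).
Qed.

Section MinimalCounterexample.
Variables (V : finType) (G : rel V) (pos : V -> (Rdefinitions.R * Rdefinitions.R)%type).
Variable arc : V -> V -> Rdefinitions.R -> (Rdefinitions.R * Rdefinitions.R)%type.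
Hypotheses (simpleG : simple_graph G) (planeG : plane_embedding G pos arc).
Hypothesis no345G : no_adjacent_345 G.
Hypothesis minimalV : forall V' : finType, has_counterexample V' -> #|V| <= #|V'|.

Lemma minimal_extends (S : {set V}) x (c : seq V) s (H : rel (V * 'I_s)) f phi0 :
  x \notin S -> {subset c <= S} -> is_kcycle G 3 c -> 0 < s -> is_cover G H ->
  valid_weights f -> dpF_coloring H f [set y in c] phi0 ->
  exists phi, dpF_coloring H f S phi /\ {in c, phi =1 phi0}.
Proof.
move=> xS cS kc s_gt0 coverH fv dp0.
have : ~ has_counterexample {y | y \in S}.
  by move/minimalV; rewrite leqNgt (card_induced_lt xS).
apply: contra_notP => noext.
pose c_sub : seq {y | y \in S} := pmap insub c.
have c_val : map val c_sub = c := map_val_pmap_insub _ cS.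
exists (relpre val G), (fun y => pos (val y)), (fun y z => arc (val y) (val z)),
  c_sub, s, (induced_cover H), (induced_weights f), (phi0 \o val).
split; split=> //.
- exact: simple_graph_induced.
- exact: plane_embedding_induced.
- exact: no_adjacent_345_induced.
- by rewrite is_kcycle_induced c_val.
- exact: is_cover_induced.
- by move=> v; apply: fv.
- have -> : [set y in c_sub]%SET = [set y | val y \in [set z in c]]%SET.
    by apply/setP => y; rewrite !inE mem_pmap_sub.
  by apply/dpF_coloring_induced => // y; rewrite inE => /cS.
move=> [phi' [dp' agree']]; apply: noext.
pose phi v := if insub v is Some y then phi' y else phi0 v.
have phi_val : phi \o val = phi' by apply/funext => y; rewrite /= /phi valK.
exists phi; split.
  apply/(dpF_coloring_induced (S := S)) => //; rewrite phi_val.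
  have -> : [set y : {y | y \in S} | val y \in S] = [set: _]%SET.
    by apply/setP => y; rewrite !inE (valP y).
  exact: dp'.
move=> y yc; have yS := cS y yc.
by rewrite /phi (insubT (fun z => z \in S) yS) agree' ?mem_pmap_sub ?SubK.
Qed.

Lemma minimal_extends_separated c0 s (H : rel (V * 'I_s)) f phi0 c B a b :
  is_kcycle G 3 c0 -> 0 < s -> is_cover G H -> valid_weights f ->
  dpF_coloring H f [set x in c0] phi0 ->
  is_kcycle G 3 c -> separates G [set x in c] B ->
  b \in B -> a \notin B :|: [set x in c] -> {subset c0 <= ~: B} ->
  exists phi, dpF_coloring H f [set: V]%SET phi /\ {in c0, phi =1 phi0}.
Proof.
move=> kc0 s_gt0 coverH fv dp0 kc sepCB bB aBC c0B.
set C := [set x in c].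
have notBC v : v \in C -> v \notin B by move=> vC; rewrite (disjointFl sepCB.1 vC).
have bB' : b \notin ~: B by rewrite inE negbK.
have [phi1 [dp1 agree1]] := minimal_extends bB' c0B kc0 s_gt0 coverH fv dp0.
have cBC : {subset c <= B :|: C} by move=> x xc; rewrite !inE xc orbT.
have [phi2 [dp2 agree2]] := minimal_extends aBC cBC kc (ltn0Sn s) (is_cover_pin C coverH)
  (valid_weights_pin C phi1 (valid_weights_gt1 b fv) fv) (dpF_coloring_pin C H f phi1).
pose phi v := if v \in B then odflt (phi1 v) (unlift ord_max (phi2 v)) else phi1 v.
have phi_phi1 : {in ~: B, phi =1 phi1} by move=> v; rewrite inE /phi => /negbTE ->.
have pin_phi : pin_weights C f phi = pin_weights C f phi1.
  apply/funext => i; apply/funext => v; rewrite /pin_weights.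
  by case: ifP => // vC; rewrite phi_phi1 // inE notBC.
exists phi; split; last by move=> v vc0; rewrite phi_phi1 ?agree1 ?c0B.
have phi2E : {in B :|: C, forall v, phi2 v = lift ord_max (phi v)}.
  move=> v; rewrite inE => /orP[vB|vC].
    rewrite /phi vB; case: unliftP => [j -> //|e2].
    (* off [C] the extra colour has weight 0 *)
    have vBC : v \in B :|: C by rewrite inE vB.
    have := dpF_coloring_weight_gt0 dp2 vBC; rewrite e2 /pin_weights unlift_none.
    by rewrite (negbTE (contraL (notBC v) vB)).
  have vc : v \in c by move: vC; rewrite inE.
  by rewrite agree2 // phi_phi1 // inE notBC.
case: dp2; rewrite -pin_phi => ord2 [uniq2 mem2 order2].
apply: (dpF_coloring_glue coverH sepCB phi2E uniq2 mem2 order2).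
exact: eq_in_dpF_coloring (fun v vB => esym (phi_phi1 v vB)) dp1.
Qed.

End MinimalCounterexample.

Theorem lemma6 (V : finType) (G : rel V)
    (pos : V -> (Rdefinitions.R * Rdefinitions.R)%type)
    (arc : V -> V -> Rdefinitions.R -> (Rdefinitions.R * Rdefinitions.R)%type)
    (c0 : seq V) (s : nat) (H : rel (V * 'I_s)) (f : 'I_s -> V -> nat)
    (phi0 : V -> 'I_s) :
  counterexample G pos arc c0 H f phi0 ->
  (forall V' : finType, has_counterexample V' -> #|V| <= #|V'|) ->
  ~ exists c, is_kcycle G 3 c /\ separating_cycle pos arc c.
Proof.
move=> [[simpleG planeG no345G kc0 s_gt0] [coverH fv dp0 noext]] minimalV.
move=> [c [kc [[w_in inside_w] [w_out outside_w]]]]; apply: noext.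
have cycG : cycle G c by case/and4P: kc.
set K := cycle_curve arc c.
pose In := [set w | `[< inside_curve K (pos w) >]].
pose Out := [set w | `[< outside_curve K (pos w) >]].
have sepIn : separates G [set x in c] In := curve_side_separates planeG cycG (@bounded_pts _).
have sepOut : separates G [set x in c] Out :=
  curve_side_separates planeG cycG (fun A => ~ bounded_pts A).
have disIO : [disjoint In & Out].
  by apply/pred0P => w /=; rewrite !inE; apply/negP => /andP[/asboolP[_ +] /asboolP[_]].
have inIn : w_in \in In by rewrite inE; apply/asboolP.
have inOut : w_out \in Out by rewrite inE; apply/asboolP.
have [c0In|c0Out] := clique_misses_side (kcycle3_clique simpleG kc0) sepIn sepOut disIO.
- apply: (minimal_extends_separated simpleG planeG no345G minimalV (a := w_out))
    kc0 s_gt0 coverH fv dp0 kc sepIn inIn _ c0In.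
  by rewrite inE (disjointFl disIO inOut) (disjointFr sepOut.1 inOut).
- apply: (minimal_extends_separated simpleG planeG no345G minimalV (a := w_in))
    kc0 s_gt0 coverH fv dp0 kc sepOut inOut _ c0Out.
  by rewrite inE (disjointFr disIO inIn) (disjointFr sepIn.1 inIn).
Qed.
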